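(* A GFNN $\mathcal{N}=(V,E,V_{\mathrm{in}},V_{\mathrm{out}},\Omega,\Theta,\Lambda)$ is irreducible with respect to the nonlinearity $\tanh$ if and only if there do not exist nodes $u_1,u_2\in V\setminus V_{\mathrm{in}}$, $u_1\ne u_2$, and an $s\in\{-1,1\}$ such that $P:=\mathrm{par}(u_1)=\mathrm{par}(u_2)$, $\omega_{u_1v}=s\,\omega_{u_2v}$ for all $v\in P$, and $\theta_{u_1}=s\,\theta_{u_2}$.
   Context: A GFNN is a tuple $(V,E,V_{\mathrm{in}},V_{\mathrm{out}},\Omega,\Theta,\Lambda)$ where $(V,E)$ is a finite loopless directed acyclic graph, $V_{\mathrm{in}}$ is the set of nodes without incoming edges, $V_{\mathrm{out}}\subset V\setminus V_{\mathrm{in}}$, $\Omega=\{\omega_{\tilde vv}\in\mathbb{R}\setminus\{0\}:(v,\tilde v)\in E\}$, $\Theta=\{\theta_v\in\mathbb{R}:v\in V\setminus V_{\mathrm{in}}\}$, and $\Lambda$ consists of real output scalars. $\mathrm{par}(u)=\{v:(v,u)\in E\}$. An affine symmetry of a nonlinearity $\rho$ is $(\zeta,\{(\alpha_s,\beta_s,\gamma_s)\}_{s\in\mathcal{I}})$ with $\mathcal{I}$ nonempty finite, real entries, $\sum_s\alpha_s\rho(\beta_st+\gamma_s)=\zeta$ for all $t\in\mathbb{R}$, and no proper $\mathcal{I}'\subsetneq\mathcal{I}$ with $\{\rho(\beta_s\cdot+\gamma_s)\}_{s\in\mathcal{I}'}\cup\{\mathbf1\}$ linearly dependent. $\mathcal{N}$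 is $\rho$-reducible if there exist a nonempty $U\subset V$ whose nodes have a common parent set $P$, nonzero reals $\kappa_v$ ($v\in P$) and $\beta_u$ ($u\in U$) with $\omega_{uv}=\beta_u\kappa_v$ for all $u\in U,v\in P$, and $\zeta\in\mathbb{R}$ and nonzero reals $\alpha_u$ such that $(\zeta,\{(\alpha_u,\beta_u,\theta_u)\}_{u\in U})$ is an affine symmetry of $\rho$; otherwise $\mathcal{N}$ is irreducible. *)

From HB Require Import structures.
From mathcomp Require Import all_boot all_order all_algebra.
From mathcomp Require Import reals sequences.
From mathcomp.analysis Require Import exp.
Set Implicit Arguments. Unset Strict Implicit. Unset Printing Implicit Defensive.
Import Order.TTheory GRing.Theory Num.Theory.
Local Open Scope ring_scope.

Definition tanh {R : realType} (x : R) : R :=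
  (expR x - expR (- x)) / (expR x + expR (- x)).

Section GFNN.
Variables (R : realType) (V : finType).

Definition acyclic (E : rel V) : Prop :=
  forall (v : V) (p : seq V), path E v p -> last v p = v -> p = [::].

Definition inputs (E : rel V) : {set V} := [set u | [forall v, ~~ E v u]].

Definition par (E : rel V) (u : V) : {set V} := [set v | E v u].

(* A GFNN on node set V.  [E v u] means (v,u) is an edge;
   [omega u v] is the weight omega_{uv} of the edge (v,u);
   [theta u] is the bias of u (meaningful for u not an input node);
   [Lambda] gives the output scalars. *)
Record GFNN := {
  E : rel V;
  Vout : {set V};
  omega : V -> V -> R;
  theta : V -> R;
  Lambda : V -> R;
  E_loopless : forall v, ~~ E v v;
  E_acyclic : acyclic E;
  Vout_sub : Vout \subset ~: inputs E;
  omega_neq0 : forall v u, E v u -> omega u v != 0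
}.

Definition lin_dep_with_one (rho : R -> R) (I : finType) (S' : {set I})
  (beta gamma : I -> R) : Prop :=
  exists (c : I -> R) (c0 : R),
    (c0 != 0 \/ exists2 s, s \in S' & c s != 0) /\
    forall t : R, \sum_(s in S') c s * rho (beta s * t + gamma s) + c0 = 0.

Definition affine_symmetry (rho : R -> R) (I : finType) (S : {set I})
  (zeta : R) (alpha beta gamma : I -> R) : Prop :=
  [/\ S != set0,
      forall t : R, \sum_(s in S) alpha s * rho (beta s * t + gamma s) = zeta &
      forall S' : {set I}, S' \proper S -> ~ lin_dep_with_one rho S' beta gamma].

Definition reducible (rho : R -> R) (N : GFNN) : Prop :=
  exists (U : {set V}) (P : {set V}),
    [/\ U != set0, U \subset ~: inputs (E N),
        (forall u, u \in U -> par (E N) u = P) &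
        exists (kappa beta alpha : V -> R) (zeta : R),
          [/\ (forall v, v \in P -> kappa v != 0),
              (forall u, u \in U -> beta u != 0),
              (forall u, u \in U -> alpha u != 0),
              (forall u v, u \in U -> v \in P -> omega N u v = beta u * kappa v) &
              affine_symmetry rho U zeta alpha beta (theta N)]].

Definition irreducible (rho : R -> R) (N : GFNN) : Prop := ~ reducible rho N.

End GFNN.

From HB Require Import structures.
From mathcomp Require Import all_boot all_order all_algebra.
From mathcomp Require Import reals sequences.
From mathcomp.analysis Require Import exp.
From mathcomp Require Import ring lra.
From Stdlib Require Import Classical.
Set Implicit Arguments. Unset Strict Implicit. Unset Printing Implicit Defensive.
Import Order.TTheory GRing.Theory Num.Theory.
Local Open Scope ring_scope.

(* Normalising signs with the oddness of tanh, it suffices to show that a relation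
   [\sum_s al s * tanh (b s * t + c s) = zeta] with all [b s > 0] and pairwise
   distinct [(b s, c s)] is trivial.  Since [tanh x = 2 w / (1 + w) - 1] with
   [w = expR (2 x)], expanding [w / (1 + w)] as a geometric series for [t -> -oo]
   turns the relation into an exponential sum with an exponentially small remainder,
   whose coefficients must therefore vanish.  For the smallest slope [m], the
   coefficient of [expR (2 n m t)] is [\sum_(b s = m) al s * a s ^+ n] with
   [a s = expR (2 c s)], as long as [n m] is not a multiple of a larger slope; this
   holds for all [n = 1 + T j] for a suitable [T], and the resulting Vandermonde
   system in the distinct [a s ^+ T] forces [al s = 0].
   Conversely, two neurons equal up to a sign [e] give the affine symmetry
   [tanh x - e tanh (e x) = 0], which is minimal because a single non-constant
   [tanh] is linearly independent of the constants. *)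

Section ExponentialSums.
Variable R : realType.

Lemma expRM_le0_antimono (a b t : R) :
  t <= 0 -> a <= b -> expR (b * t) <= expR (a * t).
Proof. by move=> t_le0 le_ab; rewrite ler_expR ler_wnM2r. Qed.

Lemma expR_decay_eq0 (D K d : R) :
  0 < d -> (forall t, t <= 0 -> `|D| <= K * expR (d * t)) -> D = 0.
Proof.
move=> d_gt0 decay; apply/eqP; apply: contraT => D_neq0.
have D_gt0 : 0 < `|D| by rewrite normr_gt0.
have K_gt0 : 0 < K by have := decay 0 (lexx 0); rewrite mulr0 expR0 mulr1; lra.
pose eps := `|D| / (2 * K).
have eps_gt0 : 0 < eps by rewrite divr_gt0 ?mulr_gt0.
pose t := Num.min 0 (ln eps / d).
have /decay : t <= 0 by rewrite ge_min lexx.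
have : expR (d * t) <= eps.
  by rewrite -[leRHS](lnK eps_gt0) ler_expR mulrC -ler_pdivlMr // ge_min lexx orbT.
move=> /(ler_wpM2l (ltW K_gt0)) le_eps le_D.
have : K * eps = `|D| / 2 by rewrite /eps; field; rewrite gt_eqF.
lra.
Qed.

Lemma expsum_const_eq0 (J : finType) (A : {set J}) (C lam : J -> R) (D M Lam : R) :
  0 < Lam -> (forall j, j \in A -> 0 < lam j) ->
  (forall t, t <= 0 ->
     `|D + \sum_(j in A) C j * expR (lam j * t)| <= M * expR (Lam * t)) ->
  D = 0.
Proof.
move=> Lam_gt0 lam_gt0 bound.
pose d := \big[Num.min/Lam]_(j in A) lam j.
have d_gt0 : 0 < d by apply: lt_bigmin.
apply: (@expR_decay_eq0 D (`|M| + \sum_(j in A) `|C j|) d d_gt0) => t t_le0.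
set X := \sum_(j in A) C j * expR (lam j * t).
have le_X : `|X| <= (\sum_(j in A) `|C j|) * expR (d * t).
  rewrite mulr_suml; apply: (le_trans (ler_norm_sum _ _ _)); apply: ler_sum => j jA.
  rewrite normrM (ger0_norm (expR_ge0 _)); apply: ler_wpM2l => //.
  exact/expRM_le0_antimono/bigmin_le_cond.
have le_M : M * expR (Lam * t) <= `|M| * expR (d * t).
  apply: le_trans (ler_wpM2r (expR_ge0 _) (ler_norm M)) _.
  exact/ler_wpM2l/expRM_le0_antimono/bigmin_le_id.
have := ler_normB (D + X) X; rewrite addrK.
have := bound t t_le0; rewrite mulrDl; lra.
Qed.

Lemma expsum_coef_eq0 (J : finType) (A : {set J}) (C lam : J -> R) (M Lam : R) :
  (forall t, t <= 0 ->
     `|\sum_(j in A) C j * expR (lam j * t)| <= M * expR (Lam * t)) ->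
  forall mu, mu < Lam -> \sum_(j in A | lam j == mu) C j = 0.
Proof.
have [n] := ubnP #|A|; elim: n A => // n IH A A_lt bound mu mu_lt.
have [->|/set0Pn [j0 j0A]] := eqVneq A set0.
  by rewrite big_pred0 // => j; rewrite inE.
have [jm jmA jm_min] := @arg_minP _ R J j0 (mem A) lam j0A.
have {}jmA : jm \in A := jmA.
set mu0 := lam jm in jm_min.
have [Lam_le|mu0_lt] := leP Lam mu0.
  rewrite big1 // => j /andP[jA /eqP lam_j]; have := jm_min j jA; lra.
pose G := [set j in A | lam j == mu0].
pose A' := A :\: G.
have lam_A' j : j \in A' -> mu0 < lam j.
  rewrite !inE negb_and => /andP[/orP[/negP //|ne] jA].
  by rewrite lt_neqAle eq_sym ne jm_min.
have sum_A t : \sum_(j in A) C j * expR (lam j * t) =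
    (\sum_(j in G) C j) * expR (mu0 * t) + \sum_(j in A') C j * expR (lam j * t).
  have G_sub : G \subset A by apply/subsetP => j; rewrite inE => /andP[].
  rewrite (big_setID G) /= mulr_suml (setIidPr G_sub).
  by congr (_ + _); apply: eq_bigr => j; rewrite inE => /andP[_ /eqP ->].
have G_eq0 : \sum_(j in G) C j = 0.
  apply: (@expsum_const_eq0 J A' C (fun j => lam j - mu0) _ M (Lam - mu0)).
  - by rewrite subr_gt0.
  - by move=> j /lam_A'; rewrite subr_gt0.
  move=> t t_le0; have e_gt0 := expR_gt0 (mu0 * t).
  have shift (a : R) : expR ((a - mu0) * t) * expR (mu0 * t) = expR (a * t).
    by rewrite -expRD mulrBl subrK.
  rewrite -(ler_pM2r e_gt0) -{1}(ger0_norm (ltW e_gt0)) -normrM -mulrA shift.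
  rewrite mulrDl [X in _ + X]mulr_suml.
  under [X in _ + X]eq_bigr => j _ do rewrite -mulrA shift.
  by rewrite -sum_A; exact: bound.
have A'_lt : (#|A'| < n)%N.
  rewrite -ltnS (leq_trans _ A_lt) // ltnS proper_card // properEneq subsetDl andbT.
  by apply/eqP => /setP /(_ jm); rewrite !inE jmA eqxx.
have bound' t : t <= 0 ->
    `|\sum_(j in A') C j * expR (lam j * t)| <= M * expR (Lam * t).
  by move=> t_le0; have := bound t t_le0; rewrite sum_A G_eq0 mul0r add0r.
rewrite (big_setIDcond _ _ G) /= (IH A' A'_lt bound' mu mu_lt) addr0.
have [->|ne] := eqVneq mu mu0.
  by rewrite -[RHS]G_eq0; apply: eq_bigl => j; rewrite !inE; case: (j \in A); case: eqP.
rewrite big1 // => j; rewrite !inE => /andP[/andP[_ /andP[_ /eqP ->]] /eqP eq_mu].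
by rewrite eq_mu eqxx in ne.
Qed.

End ExponentialSums.

Lemma geom_expansion (F : fieldType) (w : F) (K : nat) : 1 + w != 0 ->
  w / (1 + w) =
  \sum_(k < K) (-1) ^+ k * w ^+ k.+1 + (-1) ^+ K * w ^+ K.+1 / (1 + w).
Proof.
move=> w1_neq0; elim: K => [|K IH]; first by rewrite big_ord0 add0r mul1r.
by rewrite big_ord_recr /= IH -addrA; congr (_ + _); rewrite !exprS; field.
Qed.

Lemma geom_remainder_le (R : realFieldType) (w : R) (K : nat) : 0 <= w ->
  `|w / (1 + w) - \sum_(k < K) (-1) ^+ k * w ^+ k.+1| <= w ^+ K.+1.
Proof.
move=> w_ge0; have w1_gt0 : 0 < 1 + w by rewrite ltr_pwDl.
rewrite (geom_expansion K (lt0r_neq0 w1_gt0)) addrC addKr -mulrA normrM.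
rewrite normr_sign mul1r ger0_norm; last by rewrite divr_ge0 ?exprn_ge0 // ltW.
by rewrite ler_pdivrMr // ler_peMr ?exprn_ge0 // lerDl.
Qed.

Section Tanh.
Variable R : realType.
Implicit Types x : R.

Lemma tanhN x : tanh (- x) = - tanh x.
Proof. by rewrite /tanh opprK [expR (- x) + expR x]addrC -mulNr opprB. Qed.

Lemma tanh_sign (s x : R) : s = 1 \/ s = -1 -> tanh (s * x) = s * tanh x.
Proof. by case=> ->; rewrite ?mul1r // !mulN1r tanhN. Qed.

Lemma tanh0 : tanh (0 : R) = 0.
Proof. by rewrite /tanh oppr0 subrr mul0r. Qed.

Lemma tanh1_neq0 : tanh (1 : R) != 0.
Proof.
rewrite /tanh mulf_neq0 //; last by rewrite invr_neq0 // gt_eqF // addr_gt0 ?expR_gt0.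
by rewrite subr_eq0; apply/eqP => /expR_inj; lra.
Qed.

Lemma tanh_logistic x : tanh x = 2 * (expR (2 * x) / (1 + expR (2 * x))) - 1.
Proof.
rewrite /tanh expRN (expRM_natl 2 x).
have ex_gt0 := expR_gt0 x.
by field; rewrite !gt_eqF ?addr_gt0 ?exprn_gt0.
Qed.

End Tanh.

Lemma progression_avoids_multiples1 (R : realFieldType) (m x : R) : 0 < m -> m < x ->
  exists2 T : nat, (0 < T)%N & forall j k : nat, (1 + T * j)%:R * m != k%:R * x.
Proof.
move=> m_gt0 m_lt_x.
(* If [T m] is a multiple of [x], so is [(1 + T j) m - m], while [0 < m < x]. *)
have [[T [k1 [T_gt0 eq_T]]] | no_common] :=
  classic (exists T k1 : nat, (0 < T)%N /\ T%:R * m = k1%:R * x).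
  exists T => // j k; apply/eqP => eq_k.
  have eq_m : m = (k%:R - (j * k1)%:R) * x.
    by rewrite mulrBl -eq_k natrM -mulrA -eq_T natrD natrM; ring.
  have [k_le|k_gt] := leqP k (j * k1).
    have : k%:R - (j * k1)%:R <= 0 :> R by rewrite subr_le0 ler_nat.
    nra.
  have : 1 <= k%:R - (j * k1)%:R :> R by rewrite lerBrDr nat1r ler_nat.
  nra.
exists 1%N => // j k; apply/eqP => eq_k; apply: no_common.
by exists (1 + 1 * j)%N, k.
Qed.

Lemma progression_avoids_multiples (R : realFieldType) (m : R) (r : seq R) : 0 < m ->
  exists2 T : nat, (0 < T)%N &
    forall x, x \in r -> m < x -> forall j k : nat, (1 + T * j)%:R * m != k%:R * x.
Proof.
move=> m_gt0; elim: r => [|x r [T T_gt0 avoid]]; first by exists 1%N.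
have [m_lt_x|x_le_m] := ltP m x; last first.
  by exists T => // y; rewrite inE => /orP[/eqP ->|/avoid //]; rewrite ltNge x_le_m.
have [T1 T1_gt0 avoid1] := progression_avoids_multiples1 m_gt0 m_lt_x.
exists (T * T1)%N => [|y]; first by rewrite muln_gt0 T_gt0.
rewrite inE => /orP[/eqP -> _ j k|y_r m_lt_y j k]; first by rewrite (mulnC T) -mulnA avoid1.
by rewrite -mulnA avoid.
Qed.

Lemma power_sum_coef_eq0 (F : idomainType) (I : finType) (P : pred I) (beta r : I -> F) :
  {in P &, injective r} -> (forall j : nat, \sum_(i | P i) beta i * r i ^+ j = 0) ->
  forall i0, P i0 -> beta i0 = 0.
Proof.
move=> r_inj power_sums i0 P_i0.
pose p := \prod_(i | P i && (i != i0)) ('X - (r i)%:P).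
have p_sum : \sum_(i | P i) beta i * p.[r i] = 0.
  under eq_bigr => i _ do rewrite horner_coef big_distrr /=.
  rewrite exchange_big big1 // => k _.
  by under eq_bigr => i _ do rewrite mulrCA; rewrite -big_distrr /= power_sums mulr0.
have p_root i : P i -> i != i0 -> p.[r i] = 0.
  by move=> P_i ne; rewrite horner_prod (bigD1 i) ?P_i //= hornerXsubC subrr mul0r.
have p_i0 : p.[r i0] != 0.
  rewrite horner_prod prodf_seq_neq0; apply/allP => i _; apply/implyP => /andP[P_i ne].
  by rewrite hornerXsubC subr_eq0; apply: contra ne => /eqP /r_inj ->.
move: p_sum; rewrite (bigD1 i0) //= big1 ?addr0 => [/eqP|i /andP[]]; last first.
  by move=> P_i ne; rewrite p_root ?mulr0.
by rewrite mulf_eq0 (negbTE p_i0) orbF => /eqP.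
Qed.

Section TanhRelation.
Variables (R : realType) (I : finType) (S : {set I}) (al b c : I -> R) (zeta m : R).
Hypotheses (m_gt0 : 0 < m) (m_le_b : forall s, s \in S -> m <= b s)
  (tanh_rel : forall t, \sum_(s in S) al s * tanh (b s * t + c s) = zeta).

Lemma tanh_rel_remainder (K : nat) (t : R) : t <= 0 ->
  `|(zeta + \sum_(s in S) al s) / 2 -
    \sum_(s in S) al s * \sum_(k < K) (-1) ^+ k * expR (2 * (b s * t + c s)) ^+ k.+1|
  <= (\sum_(s in S) `|al s| * expR (2 * c s) ^+ K.+1) * expR (2 * K.+1%:R * m * t).
Proof.
move=> t_le0.
have -> : (zeta + \sum_(s in S) al s) / 2 = \sum_(s in S) al s *
    (expR (2 * (b s * t + c s)) / (1 + expR (2 * (b s * t + c s)))).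
  rewrite -(tanh_rel t) -big_split /= mulr_suml; apply: eq_bigr => s _.
  by rewrite tanh_logistic; field; rewrite gt_eqF ?addr_gt0 ?expR_gt0.
rewrite -sumrB mulr_suml; apply: (le_trans (ler_norm_sum _ _ _)).
apply: ler_sum => s sS; rewrite -mulrBr normrM -mulrA; apply: ler_wpM2l => //.
apply: le_trans (geom_remainder_le K (expR_ge0 _)) _.
rewrite -!expRM_natl -expRD ler_expR.
have : 0 <= K.+1%:R * ((b s - m) * - t).
  by rewrite !mulr_ge0 // ?subr_ge0 ?oppr_ge0 ?m_le_b.
lra.
Qed.

Lemma tanh_rel_const : zeta + \sum_(s in S) al s = 0.
Proof.
have /eqP : (zeta + \sum_(s in S) al s) / 2 = 0.
  apply: (@expR_decay_eq0 _ _ _ (2 * 1%:R * m)); first by rewrite !mulr_gt0.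
  move=> t /(tanh_rel_remainder 0).
  rewrite [X in _ - X]big1 ?subr0 => [bound|s _]; first exact: bound.
  by rewrite big_ord0 mulr0.
by rewrite mulf_eq0 invr_eq0 pnatr_eq0 orbF => /eqP.
Qed.

Lemma tanh_rel_coef (n : nat) : (0 < n)%N ->
  (forall s, s \in S -> m < b s -> forall k : nat, n%:R * m != k%:R * b s) ->
  \sum_(s in S | b s == m) al s * expR (2 * c s) ^+ n = 0.
Proof.
case: n => // K _ no_collision.
pose A := [set p : I * 'I_K.+1 | p.1 \in S].
pose C (p : I * 'I_K.+1) := al p.1 * (-1) ^+ p.2 * expR (2 * c p.1) ^+ p.2.+1.
pose lam (p : I * 'I_K.+1) := 2 * p.2.+1%:R * b p.1.
have expsum t : \sum_(s in S) al s *
      \sum_(k < K.+1) (-1) ^+ k * expR (2 * (b s * t + c s)) ^+ k.+1 =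
    \sum_(p in A) C p * expR (lam p * t).
  rewrite (eq_bigl (fun p => (p.1 \in S) && true)) => [|p]; last by rewrite inE andbT.
  rewrite -(pair_big (mem S) xpredT (fun s k => C (s, k) * expR (lam (s, k) * t))).
  apply: eq_bigr => s _; rewrite big_distrr; apply: eq_bigr => k _.
  rewrite /C /lam /= -!expRM_natl -!mulrA -expRD; congr (_ * (_ * expR _)); ring.
have bound t : t <= 0 -> `|\sum_(p in A) C p * expR (lam p * t)| <=
    (\sum_(s in S) `|al s| * expR (2 * c s) ^+ K.+2) * expR (2 * K.+2%:R * m * t).
  by move=> /(tanh_rel_remainder K.+1); rewrite tanh_rel_const mul0r sub0r normrN expsum.
have lt_mu : 2 * K.+1%:R * m < 2 * K.+2%:R * m by rewrite ltr_pM2r // ltr_pM2l // ltr_nat.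
have lam_eq p : p \in A ->
    (lam p == 2 * K.+1%:R * m) = (b p.1 == m) && (p.2 == ord_max).
  case: p => s k; rewrite inE /lam /= -!mulrA (inj_eq (mulfI _)) ?pnatr_eq0 // => sS.
  have [-> | b_neq] := eqVneq (b s) m.
    by rewrite (inj_eq (mulIf (lt0r_neq0 m_gt0))) eqr_nat eqSS.
  apply/negbTE; rewrite eq_sym; apply: no_collision => //.
  by rewrite lt_neqAle eq_sym b_neq m_le_b.
have := expsum_coef_eq0 bound lt_mu.
rewrite (eq_bigl (fun p => (p.1 \in S) && (b p.1 == m) && (p.2 == ord_max))) => [|p];
  last first.
  have [pA|pA] := boolP (p \in A); last by move: pA; rewrite inE => /negbTE ->.
  by rewrite lam_eq //; move: pA; rewrite inE => ->.
rewrite (eq_bigr (fun p => C (p.1, p.2))) => [|[] //].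
rewrite -(pair_big (fun s => (s \in S) && (b s == m)) (pred1 ord_max)
  (fun s k => C (s, k))) /=.
under eq_bigr do rewrite big_pred1_eq /C /= mulrAC.
by rewrite -mulr_suml => /eqP; rewrite mulf_eq0 signr_eq0 orbF => /eqP.
Qed.

Lemma tanh_rel_min_slope_eq0 : {in S &, injective (fun s => (b s, c s))} ->
  forall s, s \in S -> b s = m -> al s = 0.
Proof.
move=> bc_inj s0 s0S b_s0.
have [T T_gt0 avoid] := progression_avoids_multiples [seq b s | s <- enum S] m_gt0.
pose a s := expR (2 * c s).
have power_sums j : \sum_(s | (s \in S) && (b s == m)) (al s * a s) * (a s ^+ T) ^+ j = 0.
  rewrite -[RHS](@tanh_rel_coef (1 + T * j)) // => [|s sS m_lt_b k].
    by apply: eq_bigr => s _; rewrite exprD expr1 exprM mulrA.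
  by apply: avoid => //; apply: map_f; rewrite mem_enum.
have a_inj : {in [pred s | (s \in S) && (b s == m)] &, injective (fun s => a s ^+ T)}.
  move=> s s' /andP[sS /eqP b_s] /andP[s'S /eqP b_s'] /eqP.
  rewrite eqrXn2 ?expR_ge0 // => /eqP /expR_inj eq_c.
  by apply: bc_inj => //; rewrite b_s b_s'; congr (_, _); lra.
have /eqP : al s0 * a s0 = 0.
  by apply: (power_sum_coef_eq0 a_inj power_sums); rewrite /= s0S b_s0 eqxx.
by rewrite mulf_eq0 (gt_eqF (expR_gt0 _)) orbF => /eqP.
Qed.

End TanhRelation.

Lemma tanh_rel_trivial (R : realType) (I : finType) (S : {set I}) (al b c : I -> R)
    (zeta : R) :
  (forall s, s \in S -> 0 < b s) -> {in S &, injective (fun s => (b s, c s))} ->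
  (forall t, \sum_(s in S) al s * tanh (b s * t + c s) = zeta) ->
  forall s, s \in S -> al s = 0.
Proof.
have [n] := ubnP #|S|; elim: n S => // n IH S S_lt b_gt0 bc_inj rel s sS.
have [sm smS sm_min] := arg_minP b sS.
have {}smS : sm \in S := smS.
set m := b sm in sm_min.
have min_eq0 := tanh_rel_min_slope_eq0 (b_gt0 sm smS) sm_min rel bc_inj.
pose S' := [set s in S | b s != m].
have S'_sub : S' \subset S by apply/subsetP => s'; rewrite inE => /andP[].
have rel' t : \sum_(s in S') al s * tanh (b s * t + c s) = zeta.
  rewrite -(rel t) [RHS](bigID (fun s => b s != m)) /=.
  rewrite [X in _ = _ + X]big1 ?addr0 => [|s' /andP[s'S /negPn /eqP b_s']].
    by apply: eq_bigl => s'; rewrite inE.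
  by rewrite min_eq0 ?mul0r.
have S'_lt : (#|S'| < n)%N.
  rewrite -ltnS (leq_trans _ S_lt) // ltnS proper_card // properEneq S'_sub andbT.
  by apply/eqP => /setP /(_ sm); rewrite !inE smS eqxx.
have [b_s|b_s] := eqVneq (b s) m; first exact: min_eq0.
apply: (IH S' S'_lt _ _ rel'); last by rewrite inE sS b_s.
  by move=> s' /(subsetP S'_sub) /b_gt0.
by apply: sub_in2 bc_inj => s' /(subsetP S'_sub).
Qed.

Lemma tanh_rel_sign_pair (R : realType) (I : finType) (S : {set I}) (al b c : I -> R)
    (zeta : R) :
  S != set0 -> (forall s, s \in S -> al s != 0) -> (forall s, s \in S -> b s != 0) ->
  (forall t, \sum_(s in S) al s * tanh (b s * t + c s) = zeta) ->
  exists s1 s2 (e : R), [/\ s1 \in S, s2 \in S, s1 != s2, e = 1 \/ e = -1 &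
                          b s1 = e * b s2 /\ c s1 = e * c s2].
Proof.
move=> /set0Pn[s0 s0S] al_neq0 b_neq0 rel; apply: NNPP => no_pair.
pose sg s := Num.sg (b s).
have sg_pm1 s : s \in S -> sg s = 1 \/ sg s = -1.
  move=> /b_neq0; rewrite /sg; case: ltgtP => [/ltr0_sg|/gtr0_sg|//]; by [right|left].
have sg_sq s : s \in S -> sg s * sg s = 1.
  by move=> sS; rewrite -expr2 sqr_sg b_neq0.
have rel' t : \sum_(s in S) (sg s * al s) * tanh (`|b s| * t + sg s * c s) = zeta.
  rewrite -(rel t); apply: eq_bigr => s sS.
  rewrite normrEsg -/(sg s) -[sg s * b s * t]mulrA -mulrDr tanh_sign; last exact: sg_pm1.
  by rewrite mulrACA sg_sq ?mul1r.
have bc_inj : {in S &, injective (fun s => (`|b s|, sg s * c s))}.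
  move=> s1 s2 s1S s2S [eq_b eq_c]; have [//|ne] := eqVneq s1 s2; case: no_pair.
  exists s1, s2, (sg s1 * sg s2); split => //.
    case/sg_pm1: s1S => ->; case/sg_pm1: s2S => ->;
      rewrite ?mul1r ?mulN1r ?opprK; by [left|right].
  split; first by rewrite -mulrA -normrEsg -eq_b -numEsg.
  by rewrite -mulrA -eq_c mulrA sg_sq ?mul1r.
have b_gt0 s : s \in S -> 0 < `|b s| by move=> /b_neq0; rewrite normr_gt0.
have /eqP := tanh_rel_trivial b_gt0 bc_inj rel' s0S.
by rewrite mulf_eq0 sgr_eq0 (negbTE (b_neq0 _ s0S)) (negbTE (al_neq0 _ s0S)).
Qed.

Lemma tanh_lin_indep_card_le1 (R : realType) (I : finType) (S : {set I})
    (beta gamma : I -> R) :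
  (#|S| <= 1)%N -> (forall s, s \in S -> beta s != 0) ->
  ~ lin_dep_with_one (@tanh R) S beta gamma.
Proof.
move=> S_le1 beta_neq0 [c [c0 [nontrivial rel]]].
move: S_le1; rewrite leq_eqVlt ltnS leqn0 cards_eq0 => /orP[/cards1P[u S_u]|/eqP S0].
  subst S; have bu_neq0 : beta u != 0 by apply: beta_neq0; rewrite inE.
  have := rel (- gamma u / beta u); rewrite big_set1.
  have -> : beta u * (- gamma u / beta u) + gamma u = 0 by field.
  rewrite tanh0 mulr0 add0r => c0_eq0; subst c0.
  have := rel ((1 - gamma u) / beta u); rewrite big_set1 addr0.
  have -> : beta u * ((1 - gamma u) / beta u) + gamma u = 1 by field.
  move=> /eqP; rewrite mulf_eq0 (negbTE (tanh1_neq0 R)) orbF => /eqP cu_eq0.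
  by case: nontrivial => [/eqP //|[s]]; rewrite inE => /eqP -> /eqP.
subst S; have := rel 0; rewrite big_set0 add0r => c0_eq0; subst c0.
by case: nontrivial => [/eqP //|[s]]; rewrite inE.
Qed.

Lemma tanh_sign_pair_symmetry (R : realType) (I : finType) (u1 u2 : I) (e : R)
    (alpha beta gamma : I -> R) :
  u1 != u2 -> e = 1 \/ e = -1 -> alpha u1 = 1 -> alpha u2 = - e -> beta u2 != 0 ->
  beta u1 = e * beta u2 -> gamma u1 = e * gamma u2 ->
  affine_symmetry (@tanh R) [set u1; u2] 0 alpha beta gamma.
Proof.
move=> u12 e_pm1 alpha1 alpha2 beta2_neq0 beta1 gamma1; split.
- by apply/set0Pn; exists u1; rewrite !inE eqxx.
- move=> t; rewrite big_setU1 ?inE //= big_set1 alpha1 alpha2 beta1 gamma1.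
  by rewrite -mulrA -mulrDr tanh_sign // mul1r mulNr addrN.
move=> S' S'_proper; have e_neq0 : e != 0 by case: e_pm1 => ->; rewrite ?oppr_eq0 oner_eq0.
apply: tanh_lin_indep_card_le1; first by have := proper_card S'_proper; rewrite cards2 u12.
move=> u /(subsetP (proper_sub S'_proper)); rewrite !inE => /orP[] /eqP -> //.
by rewrite beta1 mulf_neq0.
Qed.

Section SignTwins.
Variables (R : realType) (V : finType) (N : GFNN R V).

Definition sign_twins (u1 u2 : V) (s : R) : Prop :=
  [/\ u1 \notin inputs (E N), u2 \notin inputs (E N), u1 != u2 & (s = 1 \/ s = -1)] /\
  [/\ par (E N) u1 = par (E N) u2,
      (forall v, v \in par (E N) u1 -> omega N u1 v = s * omega N u2 v) &
      theta N u1 = s * theta N u2].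

Lemma sign_twins_reducible u1 u2 s : sign_twins u1 u2 s -> reducible (@tanh R) N.
Proof.
move=> [[u1_in u2_in u12 s_pm1] [par12 omega12 theta12]].
exists [set u1; u2], (par (E N) u1); split.
- by apply/set0Pn; exists u1; rewrite !inE eqxx.
- by apply/subsetP => u /set2P[] ->; rewrite in_setC.
- by move=> u /set2P[] ->.
have u21 : (u2 == u1) = false by rewrite eq_sym (negbTE u12).
have s_neq0 : s != 0 by case: s_pm1 => ->; rewrite ?oppr_eq0 oner_eq0.
exists (omega N u2), (fun u => if u == u1 then s else 1),
  (fun u => if u == u1 then 1 else - s), 0; split.
- by move=> v; rewrite par12 inE => /omega_neq0.
- by move=> u _; case: ifP => _; rewrite ?oner_neq0.
- by move=> u _; case: ifP => _; rewrite ?oppr_eq0 ?oner_neq0.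
- by move=> u v /set2P[] -> v_par; rewrite ?eqxx ?u21 ?mul1r ?omega12.
by apply: (tanh_sign_pair_symmetry (e := s)); rewrite ?eqxx ?u21 ?mulr1 ?oner_neq0.
Qed.

Lemma reducible_sign_twins : reducible (@tanh R) N -> exists u1 u2 s, sign_twins u1 u2 s.
Proof.
move=> [U [P [U_neq0 U_sub par_U [kappa [beta [alpha [zeta]]]]]]].
move=> [_ beta_neq0 alpha_neq0 omega_U [_ rel _]].
have [u1 [u2 [s [u1U u2U u12 s_pm1 [beta12 theta12]]]]] :=
  tanh_rel_sign_pair U_neq0 alpha_neq0 beta_neq0 rel.
have notin_inputs u : u \in U -> u \notin inputs (E N).
  by move=> /(subsetP U_sub); rewrite inE.
exists u1, u2, s; split; split; rewrite ?notin_inputs ?par_U //.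
by move=> v v_P; rewrite !omega_U // beta12 mulrA.
Qed.

End SignTwins.

Theorem lemma1 (R : realType) (V : finType) (N : GFNN R V) :
  irreducible (@tanh R) N <->
  ~ (exists (u1 u2 : V) (s : R),
        [/\ u1 \notin inputs (E N), u2 \notin inputs (E N), u1 != u2 &
            (s = 1 \/ s = -1)] /\
        [/\ par (E N) u1 = par (E N) u2,
            (forall v, v \in par (E N) u1 -> omega N u1 v = s * omega N u2 v) &
            theta N u1 = s * theta N u2]).
Proof.
split=> [irr [u1 [u2 [s twins]]]|no_twins red].
  exact: irr (sign_twins_reducible twins).
exact: no_twins (reducible_sign_twins red).
Qed.
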